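(* Let $\mathcal{Q}$ be a quadrangle with vertices $A,C,B,D$ in cyclic order. For each point $X$ on the line $A\vee B$ put $Y=X\cdot\rho_{A,B}$ and $Z(X)=(C\vee X)\wedge(D\vee Y)$. Then $C\vee X\neq D\vee Y$ for every $X\in A\vee B$, and the map $X\mapsto Z(X)$ is a bijection from the line $A\vee B$ onto the harmonic curve $\mathcal{C}_{\mathcal{Q}}$.
   Context: $\mathbb{P}^2$ denotes the projective plane over a field $F$ with $\operatorname{char}F\neq 2$. For distinct points $X,Y$, $X\vee Y$ is the line through them; for distinct lines $\ell,m$, $\ell\wedge m$ is their common point. Maps act on the right: $X\cdot\rho$. Four distinct collinear points $A,C,B,D$ form a harmonic set with conjugate pairs $\{A,B\}$ and $\{C,D\}$ if the cross-ratio $(A,B;C,D)=-1$; $D$ is then the harmonic conjugate of $C$ with respect to $A,B$. Four distinct concurrent lines form a harmonic pencil with given conjugate pairs if some (equivalently every) line not through their common point meets them in a harmonic set with the corresponding conjugate pairs. For distinct points $A,B$ on a line $\ell$, the harmonic reflection $\rho_{A,B}:\ell\to\ell$ fixes $A$ and $B$ and sends every other point of $\ell$ to its harmonic conjugate with respect to $A,B$. A quadrangle $\mathcal{Q}$ with vertices $A,C,B,D$ (in cyclic order) consists of four points in general position (no three collinear) together with this cyclic order up to reversal; its sides are $A\vee C, C\vee B, B\vee D, D\vee A$, its opposite vertex pairs are $\{A,B\}$ and $\{C,D\}$, and its diagonal lines are $A\vee B$ and $C\vee D$. The harmonic curve $\mathcal{C}_{\mathcal{Q}}$ is the set consisting of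 $A,C,B,D$ together with all points $Z\notin\{A,B,C,D\}$ such that $Z\vee A, Z\vee C, Z\vee B, Z\vee D$ are four distinct lines forming a harmonic pencil with conjugate pairs $\{Z\vee A,Z\vee B\}$ and $\{Z\vee C,Z\vee D\}$. *)

(* Points (and, dually, lines) are represented by the unique normalized
   homogeneous coordinate vector: the first nonzero coordinate equals 1.
   Hence equality of points/lines is Leibniz equality. *)
From HB Require Import structures.
From mathcomp Require Import all_boot all_order all_algebra.
From Stdlib Require Import ClassicalEpsilon.
Set Implicit Arguments. Unset Strict Implicit. Unset Printing Implicit Defensive.
Import Order.TTheory GRing.Theory Num.Theory.
Local Open Scope ring_scope.

Section Proj.
Variable F : fieldType.

Definition vec3 := (F * F * F)%type.

Definition normalized (v : vec3) : bool :=
  let: (a, b, c) := v in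
  if a != 0 then a == 1 else if b != 0 then b == 1 else c == 1.

Definition point := {v : vec3 | normalized v}.
Definition line := {v : vec3 | normalized v}.

Lemma normalized_e3 : normalized (0, 0, 1).
Proof. by rewrite /normalized !eqxx. Qed.

Definition e3 : point := exist _ (0, 0, 1) normalized_e3.
Definition l3 : line := exist _ (0, 0, 1) normalized_e3.

Definition vadd (u v : vec3) : vec3 :=
  (u.1.1 + v.1.1, u.1.2 + v.1.2, u.2 + v.2).
Definition vscale (s : F) (u : vec3) : vec3 := (s * u.1.1, s * u.1.2, s * u.2).
Definition vdot (u v : vec3) : F := u.1.1 * v.1.1 + u.1.2 * v.1.2 + u.2 * v.2.

Definition incident (P : point) (l : line) : bool := vdot (val P) (val l) == 0.

(* X \/ Y : the line through X and Y (unique when X <> Y) *)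
Definition join (X Y : point) : line :=
  epsilon (inhabits l3) (fun l => incident X l /\ incident Y l).

(* l /\ m : the common point of l and m (unique when l <> m) *)
Definition meet (l m : line) : point :=
  epsilon (inhabits e3) (fun P => incident P l /\ incident P m).

Definition collinear3 (P Q R : point) : Prop :=
  exists l, [/\ incident P l, incident Q l & incident R l].

Definition distinct4 {T : eqType} (a b c d : T) : bool :=
  [&& a != b, a != c, a != d, b != c, b != d & c != d].

(* (A,B;C,D) = k : with homogeneous representatives a,b of A,B one has
   C = a + l b, D = a + m b (up to nonzero scalars) and k = l / m. *)
Definition cross_ratio_is (A B C D : point) (k : F) : Prop :=
  exists l m s t : F,
    [&& s != 0, t != 0 & m != 0] /\
    [/\ val C = vscale s (vadd (val A) (vscale l (val B))),
        val D = vscale t (vadd (val A) (vscale m (val B)))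
      & k = l / m].

(* A, C, B, D form a harmonic set with conjugate pairs {A,B}, {C,D} *)
Definition harmonic (A B C D : point) : Prop :=
  [/\ distinct4 A B C D,
      exists l, [/\ incident A l, incident B l, incident C l & incident D l]
    & cross_ratio_is A B C D (-1)].

Definition harmonic_pencil (Z : point) (l1 l2 l3 l4 : line) : Prop :=
  [/\ distinct4 l1 l2 l3 l4,
      [&& incident Z l1, incident Z l2, incident Z l3 & incident Z l4]
    & exists m, ~~ incident Z m /\
        harmonic (meet m l1) (meet m l2) (meet m l3) (meet m l4)].

Definition hrefl (A B X : point) : point :=
  if (X == A) || (X == B) then X
  else epsilon (inhabits e3) (fun Y => harmonic A B X Y).

Definition quadrangle (A C B D : point) : Prop :=
  [/\ distinct4 A C B D,
      ~ collinear3 A C B, ~ collinear3 A C D,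
      ~ collinear3 A B D & ~ collinear3 C B D].

Definition harmonic_curve (A C B D : point) (Z : point) : Prop :=
  Z \in [:: A; C; B; D] \/
   [/\ Z \notin [:: A; C; B; D],
       distinct4 (join Z A) (join Z B) (join Z C) (join Z D)
     & harmonic_pencil Z (join Z A) (join Z B) (join Z C) (join Z D)].

End Proj.

(* Everything is computed in homogeneous coordinates: joins and meets are
   cross products, and the points of A \/ B are the combinations p a + q b of
   the coordinate vectors a, b of A, B.  A central projection from a point Z
   onto a line acts linearly on coordinate vectors, so it preserves cross
   ratios; hence the pencil Z \/ A, Z \/ B, Z \/ C, Z \/ D is harmonic exactly
   when A, B, X, Y are harmonic for X = (Z \/ C) /\ (A \/ B) and
   Y = (Z \/ D) /\ (A \/ B), i.e. when Y = X rho_{A,B} and Z = Z(X).  This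
   gives both inclusions between the image of X |-> Z(X) and the curve.
   Injectivity: X is recovered from Z(X) as (C \/ Z(X)) /\ (A \/ B), except
   when Z(X) = C, where X rho_{A,B} = (D \/ C) /\ (A \/ B) recovers X because
   rho_{A,B} is an involution. *)
From mathcomp Require Import all_boot all_order all_algebra.
From mathcomp Require Import ring.
From Stdlib Require Import ClassicalEpsilon.
Set Implicit Arguments. Unset Strict Implicit. Unset Printing Implicit Defensive.
Import GRing.Theory.
Local Open Scope ring_scope.

Section ProjectivePlane.
Variable F : fieldType.
Implicit Types (s t x y : F) (u v w : vec3 F) (P Q X Y Z : point F) (l m n : line F).

Definition vec0 : vec3 F := (0, 0, 0).

Definition cross u v : vec3 F :=
  (u.1.2 * v.2 - u.2 * v.1.2, u.2 * v.1.1 - u.1.1 * v.2, u.1.1 * v.1.2 - u.1.2 * v.1.1).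

Definition lincomb s t u v := vadd (vscale s u) (vscale t v).

Definition det u v w := vdot (cross u v) w.

Local Ltac vec_ring :=
  repeat match goal with v : vec3 _ |- _ => case: v => [[? ?] ?] end;
  unfold det, lincomb, vadd, vscale, vdot, cross, vec0; simpl; try congr (_, _, _); ring.

Definition lead_coord v : F :=
  let: (a, b, c) := v in if a != 0 then a else if b != 0 then b else c.

Lemma lead_coord_eq0 v : (lead_coord v == 0) = (v == vec0).
Proof.
case: v => [[a b] c] /=; rewrite /vec0 !xpair_eqE.
case: (eqVneq a 0) => [->|a0]; case: (eqVneq b 0) => [->|b0];
  rewrite ?eqxx /= ?(negbTE a0) ?(negbTE b0) ?andbF //.
Qed.

Lemma normalizedE v : normalized v = (lead_coord v == 1).
Proof.
by case: v => [[a b] c]; rewrite /normalized /lead_coord; case: (a != 0); case: (b != 0).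
Qed.

Lemma lead_coord_scale s v : s != 0 -> lead_coord (vscale s v) = s * lead_coord v.
Proof.
move=> s0; case: v => [[a b] c]; rewrite /vscale /lead_coord /= !mulf_eq0 (negbTE s0) /=.
by case: (a != 0); case: (b != 0).
Qed.

Lemma vscale1 v : vscale 1 v = v.
Proof. by case: v => [[a b] c]; rewrite /vscale /= !mul1r. Qed.

Lemma vscaleA s t v : vscale s (vscale t v) = vscale (s * t) v.
Proof. by case: v => [[a b] c]; rewrite /vscale /= !mulrA. Qed.

Lemma vscale_eq0 s v : (vscale s v == vec0) = (s == 0) || (v == vec0).
Proof.
case: v => [[a b] c]; rewrite /vscale /vec0 /= !xpair_eqE !mulf_eq0.
by case: (s == 0).
Qed.

Lemma lead_coord_val P : lead_coord (val P) = 1.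
Proof. by apply/eqP; rewrite -normalizedE; exact: valP. Qed.

Lemma val_neq0 P : val P != vec0.
Proof. by rewrite -lead_coord_eq0 lead_coord_val oner_neq0. Qed.

(* [e3] is a junk value, returned for [v = 0]. *)
Definition point_of v : point F := insubd (e3 F) (vscale (lead_coord v)^-1 v).

Lemma val_point_of v : v != vec0 -> val (point_of v) = vscale (lead_coord v)^-1 v.
Proof.
move=> v0; have l0 : lead_coord v != 0 by rewrite lead_coord_eq0.
by rewrite val_insubd normalizedE lead_coord_scale ?mulVf ?eqxx ?invr_eq0.
Qed.

Lemma point_of_val P : point_of (val P) = P.
Proof. by rewrite /point_of lead_coord_val invr1 vscale1 valKd. Qed.

Lemma point_of_scale s v : s != 0 -> point_of (vscale s v) = point_of v.
Proof.
move=> s0; rewrite /point_of.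
have [->|v0] := eqVneq v vec0; first by rewrite /vscale /vec0 /= mulr0.
by rewrite lead_coord_scale // invfM vscaleA mulrAC mulVf ?mul1r.
Qed.

Lemma point_eq_scale P Q s : val P = vscale s (val Q) -> P = Q.
Proof.
move=> ePQ; have s0 : s != 0.
  by apply: contraNneq (val_neq0 P) => s0; rewrite ePQ s0 vscale_eq0 eqxx.
by rewrite -(point_of_val P) ePQ point_of_scale // point_of_val.
Qed.

Lemma vdotC u v : vdot u v = vdot v u.
Proof. by vec_ring. Qed.

Lemma vdot_scale s u v : vdot (vscale s u) v = s * vdot u v.
Proof. by vec_ring. Qed.

Lemma vdot_crossl u v : vdot u (cross u v) = 0.
Proof. by vec_ring. Qed.

Lemma vdot_crossr u v : vdot v (cross u v) = 0.
Proof. by vec_ring. Qed.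

Lemma cross_crossE u v w :
  cross (cross u v) w = vadd (vscale (vdot u w) v) (vscale (- vdot v w) u).
Proof. by vec_ring. Qed.

Lemma cross0l v : cross vec0 v = vec0.
Proof. by vec_ring. Qed.

Lemma cross0r v : cross v vec0 = vec0.
Proof. by vec_ring. Qed.

Lemma exists_vdot_neq0 u : u != vec0 -> exists w, vdot u w != 0.
Proof.
case: u => [[a b] c] u0.
have [a0|a0] := eqVneq a 0; last by exists (1, 0, 0); rewrite /vdot /= mulr1 !mulr0 !addr0.
have [b0|b0] := eqVneq b 0; last by exists (0, 1, 0); rewrite /vdot /= mulr1 !mulr0 addr0 add0r.
exists (0, 0, 1); rewrite /vdot /= mulr1 !mulr0 !add0r.
by apply: contraNneq u0 => c0; rewrite a0 b0 c0.
Qed.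

Lemma lincomb_eq0_scale x y u v : x != 0 -> lincomb x y u v = vec0 -> u = vscale (- y / x) v.
Proof.
move=> x0; case: u => [[u1 u2] u3]; case: v => [[v1 v2] v3].
rewrite /lincomb /vscale /vadd /vec0 /= => -[e1 e2 e3].
have solve (a b : F) : x * a + y * b = 0 -> a = - y / x * b.
  by move=> /eqP; rewrite addr_eq0 => /eqP e; apply: (mulfI x0); rewrite e; field.
by congr (_, _, _); apply: solve.
Qed.

Lemma cross_eq0_parallel u w : u != vec0 -> cross u w = vec0 -> exists k, w = vscale k u.
Proof.
move=> u0 uw0; have [e ue] := exists_vdot_neq0 u0.
eexists; apply: (lincomb_eq0_scale (y := - vdot w e) ue).
by rewrite /lincomb -cross_crossE uw0 cross0l.
Qed.

Lemma cross_neq0 P Q : P != Q -> cross (val P) (val Q) != vec0.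
Proof.
move=> PQ; apply/negP => /eqP e; have [k ek] := cross_eq0_parallel (val_neq0 P) e.
by move: PQ; rewrite (point_eq_scale ek) eqxx.
Qed.

Lemma incidentC P l : incident P l = incident l P.
Proof. by rewrite /incident vdotC. Qed.

Definition line_through P Q : line F := point_of (cross (val P) (val Q)).

Lemma incident_line_throughl P Q : P != Q -> incident P (line_through P Q).
Proof.
move=> PQ; rewrite /incident val_point_of ?cross_neq0 //.
by rewrite vdotC vdot_scale vdotC vdot_crossl mulr0.
Qed.

Lemma incident_line_throughr P Q : P != Q -> incident Q (line_through P Q).
Proof.
move=> PQ; rewrite /incident val_point_of ?cross_neq0 //.
by rewrite vdotC vdot_scale vdotC vdot_crossr mulr0.
Qed.

Lemma line_throughE P Q l : P != Q -> incident P l -> incident Q l -> l = line_through P Q.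
Proof.
move=> PQ /eqP Pl /eqP Ql.
have /(cross_eq0_parallel (cross_neq0 PQ)) [k ek] : cross (cross (val P) (val Q)) (val l) = vec0.
  rewrite cross_crossE Pl Ql oppr0.
  by move: (val P) (val Q) => u v; vec_ring.
have k0 : k != 0 by apply: contraNneq (val_neq0 l) => k0; rewrite ek k0 vscale_eq0 eqxx.
by rewrite -(point_of_val l) ek point_of_scale.
Qed.

Lemma join_incident P Q : P != Q -> incident P (join P Q) /\ incident Q (join P Q).
Proof.
move=> PQ; apply: (epsilon_spec _ (fun l => incident P l /\ incident Q l)).
by exists (line_through P Q); rewrite incident_line_throughl ?incident_line_throughr.
Qed.

Lemma incident_joinl P Q : P != Q -> incident P (join P Q).
Proof. by case/join_incident. Qed.

Lemma incident_joinr P Q : P != Q -> incident Q (join P Q).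
Proof. by case/join_incident. Qed.

Lemma join_line_through P Q : P != Q -> join P Q = line_through P Q.
Proof. by move=> PQ; apply: line_throughE; [|apply: incident_joinl|apply: incident_joinr]. Qed.

Lemma join_unique P Q l : P != Q -> incident P l -> incident Q l -> l = join P Q.
Proof. by move=> PQ Pl Ql; rewrite join_line_through // (line_throughE PQ Pl Ql). Qed.

Lemma common_point_unique l m P Q : l != m ->
  incident P l -> incident P m -> incident Q l -> incident Q m -> P = Q.
Proof.
rewrite !(incidentC _ l) !(incidentC _ m) => lm Pl Pm Ql Qm.
by rewrite (line_throughE lm Pl Pm) (line_throughE lm Ql Qm).
Qed.

Lemma meet_incident l m : l != m -> incident (meet l m) l /\ incident (meet l m) m.
Proof.
move=> lm; apply: (epsilon_spec _ (fun P => incident P l /\ incident P m)).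
exists (line_through l m).
by rewrite !(incidentC (line_through _ _)) incident_line_throughl ?incident_line_throughr.
Qed.

Lemma incident_meetl l m : l != m -> incident (meet l m) l.
Proof. by case/meet_incident. Qed.

Lemma incident_meetr l m : l != m -> incident (meet l m) m.
Proof. by case/meet_incident. Qed.

Lemma meet_unique l m P : l != m -> incident P l -> incident P m -> P = meet l m.
Proof. by move=> lm Pl Pm; apply: (common_point_unique lm) => //; case: (meet_incident lm). Qed.

Lemma point_neq_of_incident P Q l : ~~ incident P l -> incident Q l -> P != Q.
Proof. by move=> Pl Ql; apply: contraNneq Pl => ->. Qed.

Lemma line_neq_of_incident P l m : ~~ incident P l -> incident P m -> l != m.
Proof. by move=> Pl Pm; apply: contraNneq Pl => ->. Qed.

Lemma meet_join_id Z P l : ~~ incident Z l -> incident P l -> meet l (join Z P) = P.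
Proof.
move=> Zl Pl; have ZP := point_neq_of_incident Zl Pl.
by rewrite -(meet_unique (line_neq_of_incident Zl (incident_joinl ZP)) Pl (incident_joinr ZP)).
Qed.

Lemma join_meet_join Z P l : ~~ incident P l -> Z != P -> join P (meet l (join Z P)) = join Z P.
Proof.
move=> Pl ZP; have lZP := line_neq_of_incident Pl (incident_joinr ZP).
have PX := point_neq_of_incident Pl (incident_meetl lZP).
by rewrite -(join_unique PX (incident_joinr ZP) (incident_meetr lZP)).
Qed.

Lemma vscale_vadd_lincomb s x u v : vscale s (vadd u (vscale x v)) = lincomb s (s * x) u v.
Proof. by vec_ring. Qed.

Lemma lincomb10 u v : u = lincomb 1 0 u v.
Proof. by vec_ring. Qed.

Lemma lincomb01 u v : v = lincomb 0 1 u v.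
Proof. by vec_ring. Qed.

Lemma lincomb0l y u v : lincomb 0 y u v = vscale y v.
Proof. by vec_ring. Qed.

Lemma lincomb0r x u v : lincomb x 0 u v = vscale x u.
Proof. by vec_ring. Qed.

Lemma vdot_lincomb x y u v w : vdot (lincomb x y u v) w = x * vdot u w + y * vdot v w.
Proof. by vec_ring. Qed.

Lemma lincomb_eq0 P Q x y : P != Q -> lincomb x y (val P) (val Q) = vec0 -> x = 0 /\ y = 0.
Proof.
move=> PQ e; have PQ0 := cross_neq0 PQ.
have ex : vscale x (cross (val P) (val Q)) = cross (lincomb x y (val P) (val Q)) (val Q).
  by move: (val P) (val Q) => u v; vec_ring.
have ey : vscale y (cross (val P) (val Q)) = cross (val P) (lincomb x y (val P) (val Q)).
  by move: (val P) (val Q) => u v; vec_ring.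
move: ex ey; rewrite e cross0l cross0r => /eqP + /eqP.
by rewrite !vscale_eq0 (negbTE PQ0) !orbF => /eqP -> /eqP ->.
Qed.

Lemma lincomb_inj P Q x1 y1 x2 y2 : P != Q ->
  lincomb x1 y1 (val P) (val Q) = lincomb x2 y2 (val P) (val Q) -> x1 = x2 /\ y1 = y2.
Proof.
move=> PQ e.
suff /(lincomb_eq0 PQ) [/eqP + /eqP] : lincomb (x1 - x2) (y1 - y2) (val P) (val Q) = vec0.
  by rewrite !subr_eq0 => /eqP -> /eqP ->.
have -> : lincomb (x1 - x2) (y1 - y2) (val P) (val Q) =
    vadd (lincomb x1 y1 (val P) (val Q)) (vscale (-1) (lincomb x2 y2 (val P) (val Q))).
  by move: (val P) (val Q) => u v; vec_ring.
by rewrite e; move: (lincomb _ _ _ _) => w; vec_ring.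
Qed.

Lemma cramer (a b c d : vec3 F) : vscale (det a b c) d =
  vadd (vadd (vscale (det d b c) a) (vscale (det a d c) b)) (vscale (det a b d) c).
Proof. by vec_ring. Qed.

Lemma span_join P Q X : P != Q -> incident X (join P Q) ->
  exists x y, val X = lincomb x y (val P) (val Q).
Proof.
move=> PQ; rewrite join_line_through // /incident val_point_of ?cross_neq0 //.
rewrite vdotC vdot_scale mulf_eq0 invr_eq0 lead_coord_eq0 (negbTE (cross_neq0 PQ)) orFb.
move=> /eqP X0; have {}X0 : det (val P) (val Q) (val X) = 0 := X0.
have [w w0] := exists_vdot_neq0 (cross_neq0 PQ); rewrite -/(det _ _ w) in w0.
have := cramer (val P) (val Q) w (val X); rewrite X0.
move: (det _ _ w) w0 (det (val X) _ _) (det _ (val X) _) => d d0 x y eX.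
exists (x / d), (y / d).
rewrite -[val X]vscale1 -(mulVf d0) -vscaleA eX.
by clear eX; move: (val P) (val Q) w => u v w'; vec_ring.
Qed.

Lemma incident_lincomb P Q X x y : P != Q ->
  val X = lincomb x y (val P) (val Q) -> incident X (join P Q).
Proof.
move=> PQ eX; move: (incident_joinl PQ) (incident_joinr PQ).
by rewrite /incident eX vdot_lincomb => /eqP -> /eqP ->; rewrite !mulr0 addr0.
Qed.

Lemma distinct4I (T : eqType) (a b c d : T) :
  a != b -> a != c -> a != d -> b != c -> b != d -> c != d -> distinct4 a b c d.
Proof. by move=> *; apply/and5P; split => //; apply/andP. Qed.

Lemma harmonic_incident P Q X Y : harmonic P Q X Y ->
  incident X (join P Q) /\ incident Y (join P Q).
Proof.
case=> /and5P [PQ _ _ _ _] [l [Pl Ql Xl Yl]] _.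
by rewrite -(join_unique PQ Pl Ql).
Qed.

Lemma harmonic_coords P Q X Y : harmonic P Q X Y -> exists x s t,
  [/\ x != 0, s != 0, t != 0,
      val X = vscale s (vadd (val P) (vscale x (val Q)))
    & val Y = vscale t (vadd (val P) (vscale (- x) (val Q)))].
Proof.
case=> _ _ [x [y [s [t [/and3P [s0 t0 y0] [eX eY exy]]]]]].
have ex : x = - y by rewrite -(divfK y0 x) -exy mulN1r.
by exists (- y), s, t; rewrite opprK -ex; split; rewrite // ex oppr_eq0.
Qed.

Lemma harmonic_unique P Q X Y1 Y2 : harmonic P Q X Y1 -> harmonic P Q X Y2 -> Y1 = Y2.
Proof.
move=> H1 H2; have /and5P [PQ _ _ _ _] : distinct4 P Q X Y1 by case: H1.
have [x1 [s1 [t1 [_ s10 _ eX1 eY1]]]] := harmonic_coords H1.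
have [x2 [s2 [t2 [_ _ t20 eX2 eY2]]]] := harmonic_coords H2.
move: eX1; rewrite eX2 !vscale_vadd_lincomb => /(lincomb_inj PQ) [es ex].
have {ex} ex : x1 = x2 by move: ex; rewrite es => /(mulfI s10).
apply: (@point_eq_scale _ _ (t1 / t2)).
by rewrite eY1 eY2 vscaleA divfK // ex.
Qed.

Definition vlinear (f : vec3 F -> vec3 F) :=
  forall s x u v, f (vscale s (vadd u (vscale x v))) = vscale s (vadd (f u) (vscale x (f v))).

Lemma cross_ratio_is_linear P1 P2 P3 P4 Q1 Q2 Q3 Q4 f (c1 c2 c3 c4 k : F) :
  vlinear f -> c1 != 0 -> c2 != 0 -> c3 != 0 -> c4 != 0 ->
  val Q1 = vscale c1 (f (val P1)) -> val Q2 = vscale c2 (f (val P2)) ->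
  val Q3 = vscale c3 (f (val P3)) -> val Q4 = vscale c4 (f (val P4)) ->
  cross_ratio_is P1 P2 P3 P4 k -> cross_ratio_is Q1 Q2 Q3 Q4 k.
Proof.
move=> f_lin c10 c20 c30 c40 e1 e2 e3 e4 [x [y [s [t [/and3P [s0 t0 y0] [f3 f4 ek]]]]]].
exists (x * c1 / c2), (y * c1 / c2), (c3 * s / c1), (c4 * t / c1); split.
  by rewrite !mulf_eq0 !invr_eq0 !negb_or s0 t0 y0 c10 c20 c30 c40.
split.
- rewrite e3 f3 f_lin e1 e2; move: (f (val P1)) (f (val P2)) => [[? ?] ?] [[? ?] ?].
  by rewrite /vscale /vadd /=; congr (_, _, _); field; rewrite ?c10 ?c20.
- rewrite e4 f4 f_lin e1 e2; move: (f (val P1)) (f (val P2)) => [[? ?] ?] [[? ?] ?].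
  by rewrite /vscale /vadd /=; congr (_, _, _); field; rewrite ?c10 ?c20.
- by rewrite ek; field; rewrite ?c10 ?c20 ?y0.
Qed.

(* Coordinates of the point where the line through [z] and [v] meets the
   line [n]. *)
Definition central_proj (n z v : vec3 F) := lincomb (vdot n z) (- vdot n v) v z.

Lemma central_proj_linear (n z : vec3 F) : vlinear (central_proj n z).
Proof.
by move=> s x u v; rewrite /central_proj; vec_ring.
Qed.

Definition perspective n m l Z P Q :=
  [/\ incident Z l, incident P l, incident P m, incident Q l & incident Q n].

Lemma perspective_central_proj n m l Z P Q :
  ~~ incident Z n -> ~~ incident Z m -> perspective n m l Z P Q ->
  central_proj (val n) (val Z) (val P) != vec0 /\
  Q = point_of (central_proj (val n) (val Z) (val P)).
Proof.
move=> Zn Zm [Zl Pl Pm Ql Qn].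
have nZ0 : vdot (val n) (val Z) != 0 by rewrite vdotC.
have proj0 : central_proj (val n) (val Z) (val P) != vec0.
  apply/negP => /eqP /(lincomb_eq0_scale nZ0) /point_eq_scale PZ.
  by rewrite -PZ Pm in Zm.
split => //; apply: (common_point_unique (line_neq_of_incident Zn Zl)) => //.
- rewrite /incident val_point_of // vdot_scale /central_proj vdot_lincomb.
  by rewrite (vdotC (val P)) (vdotC (val Z)) (mulrC (vdot _ (val Z))) mulNr addrN mulr0.
- rewrite /incident val_point_of // vdot_scale /central_proj vdot_lincomb.
  by move: Zl Pl => /eqP -> /eqP ->; rewrite !mulr0 addr0 mulr0.
Qed.

Lemma perspective_inj n m l1 l2 Z P1 Q1 P2 Q2 : ~~ incident Z n -> ~~ incident Z m ->
  perspective n m l1 Z P1 Q1 -> perspective n m l2 Z P2 Q2 -> P1 != P2 -> Q1 != Q2.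
Proof.
move=> Zn Zm [Zl1 Pl1 Pm1 Ql1 Qn1] [Zl2 Pl2 Pm2 Ql2 Qn2].
apply: contraNneq => eQ; rewrite -{}eQ in Ql2 Qn2.
have ZQ := point_neq_of_incident Zn Qn1.
apply/eqP; apply: (common_point_unique (line_neq_of_incident Zm Zl1)) => //.
by rewrite (join_unique ZQ Zl1 Ql1) -(join_unique ZQ Zl2 Ql2).
Qed.

Lemma harmonic_perspective n m l1 l2 l3 l4 Z P1 P2 P3 P4 Q1 Q2 Q3 Q4 :
  ~~ incident Z n -> ~~ incident Z m ->
  perspective n m l1 Z P1 Q1 -> perspective n m l2 Z P2 Q2 ->
  perspective n m l3 Z P3 Q3 -> perspective n m l4 Z P4 Q4 ->
  harmonic P1 P2 P3 P4 -> harmonic Q1 Q2 Q3 Q4.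
Proof.
move=> Zn Zm o1 o2 o3 o4 [/and5P [d12 d13 d14 d23 /andP [d24 d34]] _ hcr].
split.
- have inj := perspective_inj Zn Zm.
  by apply: distinct4I; [apply: inj o1 o2 d12 | apply: inj o1 o3 d13 | apply: inj o1 o4 d14
    | apply: inj o2 o3 d23 | apply: inj o2 o4 d24 | apply: inj o3 o4 d34].
- by exists n; case: o1 => _ _ _ _ ->; case: o2 => _ _ _ _ ->; case: o3 => _ _ _ _ ->;
    case: o4 => _ _ _ _ ->.
have [z1 q1] := perspective_central_proj Zn Zm o1.
have [z2 q2] := perspective_central_proj Zn Zm o2.
have [z3 q3] := perspective_central_proj Zn Zm o3.
have [z4 q4] := perspective_central_proj Zn Zm o4.
have lead0 v : v != vec0 -> (lead_coord v)^-1 != 0 by rewrite invr_eq0 lead_coord_eq0.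
apply: (cross_ratio_is_linear (@central_proj_linear (val n) (val Z))
  (lead0 _ z1) (lead0 _ z2) (lead0 _ z3) (lead0 _ z4) _ _ _ _ hcr).
all: by rewrite ?q1 ?q2 ?q3 ?q4 val_point_of.
Qed.

Lemma harmonic_meet_pencil Z l1 l2 l3 l4 n :
  harmonic_pencil Z l1 l2 l3 l4 -> ~~ incident Z n ->
  harmonic (meet n l1) (meet n l2) (meet n l3) (meet n l4).
Proof.
case=> _ /and4P [Zl1 Zl2 Zl3 Zl4] [m [Zm Hm]] Zn.
have persp l : incident Z l -> perspective n m l Z (meet m l) (meet n l).
  move=> Zl; have [ml nl] := (line_neq_of_incident Zm Zl, line_neq_of_incident Zn Zl).
  by split; rewrite ?incident_meetl ?incident_meetr.
exact: (harmonic_perspective Zn Zm (persp _ Zl1) (persp _ Zl2) (persp _ Zl3) (persp _ Zl4)).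
Qed.

Lemma harmonic_pencil_join Z P1 P2 P3 P4 :
  harmonic P1 P2 P3 P4 -> ~~ incident Z (join P1 P2) ->
  harmonic_pencil Z (join Z P1) (join Z P2) (join Z P3) (join Z P4).
Proof.
move=> H Zn; have [/and5P [d12 d13 d14 d23 /andP [d24 d34]] _ _] := H.
have [P3n P4n] := harmonic_incident H.
have [P1n P2n] := (incident_joinl d12, incident_joinr d12).
have join_neq P Q : incident P (join P1 P2) -> incident Q (join P1 P2) ->
    P != Q -> join Z P != join Z Q.
  by move=> Pn Qn; apply: contraNneq => e; rewrite -(meet_join_id Zn Pn) e meet_join_id.
split.
- by apply: distinct4I; apply: join_neq.
- by rewrite !incident_joinl // (point_neq_of_incident Zn).
by exists (join P1 P2); split => //; rewrite !meet_join_id.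
Qed.

Section HarmonicReflection.
Variables A B : point F.
Hypotheses (char2 : (2%:R : F) != 0) (neq_AB : A != B).
Local Notation rho := (hrefl A B).

Lemma harmonic_of_coords X Y x s t : x != 0 -> s != 0 -> t != 0 ->
  val X = vscale s (vadd (val A) (vscale x (val B))) ->
  val Y = vscale t (vadd (val A) (vscale (- x) (val B))) -> harmonic A B X Y.
Proof.
move=> x0 s0 t0; rewrite !vscale_vadd_lincomb => eX eY.
have off_vertices c y P : c != 0 -> y != 0 -> val P = lincomb c y (val A) (val B) ->
    A != P /\ B != P.
  move=> c0 y0 eP; split; apply/negP => /eqP ePv; move: eP.
  - rewrite -ePv {1}(lincomb10 (val A) (val B)) => /(lincomb_inj neq_AB) [_ /eqP].
    by rewrite eq_sym (negbTE y0).
  - rewrite -ePv {1}(lincomb01 (val A) (val B)) => /(lincomb_inj neq_AB) [/eqP].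
    by rewrite eq_sym (negbTE c0).
have [AX BX] := off_vertices _ _ _ s0 (mulf_neq0 s0 x0) eX.
have [AY BY] : A != Y /\ B != Y.
  by apply: (off_vertices _ _ _ t0 _ eY); rewrite mulf_neq0 ?oppr_eq0.
have XY : X != Y.
  apply/negP => /eqP eXY; move: eX; rewrite eXY eY => /(lincomb_inj neq_AB) [ets].
  rewrite -ets mulrN => /eqP; rewrite eq_sym -addr_eq0 -mulr2n -mulr_natr mulf_eq0.
  by rewrite (negbTE char2) orbF mulf_eq0 (negbTE t0) (negbTE x0).
split.
- exact: distinct4I.
- exists (join A B); rewrite incident_joinl // incident_joinr //.
  by rewrite (incident_lincomb neq_AB eX) (incident_lincomb neq_AB eY).
exists x, (- x), s, t; split; first by rewrite s0 t0 oppr_eq0 x0.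
by split; rewrite ?vscale_vadd_lincomb // invrN mulrN mulfV.
Qed.

Lemma harmonic_sym X Y : harmonic A B X Y -> harmonic A B Y X.
Proof.
move=> /harmonic_coords [x [s [t [x0 s0 t0 eX eY]]]].
apply: (harmonic_of_coords (x := - x) (s := t) (t := s) _ _ _ eY);
  by rewrite ?oppr_eq0 ?opprK.
Qed.

Lemma harmonic_exists X : incident X (join A B) -> X != A -> X != B ->
  exists Y, harmonic A B X Y.
Proof.
move=> XAB XA XB; have [p [q eX]] := span_join neq_AB XAB.
have p0 : p != 0.
  by apply: contraNneq XB => p0; apply/eqP/(@point_eq_scale _ _ q); rewrite eX p0 lincomb0l.
have q0 : q != 0.
  by apply: contraNneq XA => q0; apply/eqP/(@point_eq_scale _ _ p); rewrite eX q0 lincomb0r.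
set w := vadd (val A) (vscale (- (q / p)) (val B)).
have w0 : w != vec0.
  apply/eqP => w0; have := vscale_vadd_lincomb 1 (- (q / p)) (val A) (val B).
  rewrite -/w w0 /vscale /vec0 /= mulr0 => /esym /(lincomb_eq0 neq_AB) [/eqP].
  by rewrite oner_eq0.
exists (point_of w); apply: (harmonic_of_coords (x := q / p) (s := p)) (val_point_of w0).
- by rewrite mulf_neq0 ?invr_eq0.
- by [].
- by rewrite invr_eq0 lead_coord_eq0.
- by rewrite eX vscale_vadd_lincomb mulrC divfK.
Qed.

Lemma hrefl_vertex X : X = A \/ X = B -> rho X = X.
Proof. by rewrite /hrefl => -[->|->]; rewrite eqxx ?orbT. Qed.

Lemma hrefl_harmonic X : incident X (join A B) -> X != A -> X != B ->
  harmonic A B X (rho X).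
Proof.
move=> XAB XA XB; rewrite /hrefl (negbTE XA) (negbTE XB) /=.
by apply: (epsilon_spec _ (fun Y => harmonic A B X Y)); exact: harmonic_exists.
Qed.

Lemma hreflP X : incident X (join A B) ->
  (X = A \/ X = B) /\ rho X = X \/ [/\ X != A, X != B & harmonic A B X (rho X)].
Proof.
move=> XAB; have [->|XA] := eqVneq X A; first by left; split; [left|apply: hrefl_vertex; left].
have [->|XB] := eqVneq X B; first by left; split; [right|apply: hrefl_vertex; right].
by right; split => //; apply: hrefl_harmonic.
Qed.

Lemma incident_hrefl X : incident X (join A B) -> incident (rho X) (join A B).
Proof. by move=> XAB; case/hreflP: (XAB) => [[_ ->] //|[_ _ /harmonic_incident []]]. Qed.

Lemma hrefl_fixed X : incident X (join A B) -> rho X = X -> X = A \/ X = B.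
Proof.
case/hreflP => [[] //|[_ _ [/and5P [_ _ _ _ /andP [_ XY]] _ _]]] eXY.
by rewrite eXY eqxx in XY.
Qed.

Lemma hrefl_harmonicE X Y : harmonic A B X Y -> rho X = Y.
Proof.
move=> H; have [/and5P [_ AX _ BX _] _ _] := H.
apply: (harmonic_unique _ H); apply: hrefl_harmonic; rewrite 1?eq_sym //.
by case: (harmonic_incident H).
Qed.

Lemma hreflK X : incident X (join A B) -> rho (rho X) = X.
Proof.
case/hreflP => [[_ e]|[_ _ H]]; first by rewrite !e.
exact/hrefl_harmonicE/harmonic_sym.
Qed.

End HarmonicReflection.

Section HarmonicCurve.
Variables A C B D : point F.
Hypotheses (char2 : (2%:R : F) != 0) (quad : quadrangle A C B D).
Local Notation AB := (join A B).
Local Notation rho := (hrefl A B).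

Definition curve_param X := meet (join C X) (join D (rho X)).

Lemma quad_neqAB : A != B.
Proof. by case: quad => /and5P []. Qed.

Lemma quad_neqCD : C != D.
Proof. by case: quad => /and5P [_ _ _ _ /andP []]. Qed.

Lemma quad_C_notin_AB : ~~ incident C AB.
Proof.
apply/negP => CAB; case: quad => _ nACB _ _ _; apply: nACB.
by exists AB; rewrite CAB incident_joinl ?incident_joinr ?quad_neqAB.
Qed.

Lemma quad_D_notin_AB : ~~ incident D AB.
Proof.
apply/negP => DAB; case: quad => _ _ _ nABD _; apply: nABD.
by exists AB; rewrite DAB incident_joinl ?incident_joinr ?quad_neqAB.
Qed.

Lemma joinC_neq_joinD X : incident X AB -> join C X != join D (rho X).
Proof.
move=> XAB; apply/eqP => e.
have YAB := incident_hrefl char2 quad_neqAB XAB.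
have CX := point_neq_of_incident quad_C_notin_AB XAB.
have DY := point_neq_of_incident quad_D_notin_AB YAB.
have [Cl Xl] := (incident_joinl CX, incident_joinr CX).
have [Dl Yl] : incident D (join C X) /\ incident (rho X) (join C X).
  by rewrite e incident_joinl ?incident_joinr.
have [XY|XY] := eqVneq X (rho X).
  case: quad => _ _ nACD _ nCBD.
  by case: (hrefl_fixed char2 quad_neqAB XAB (esym XY)) => eX; [apply: nACD|apply: nCBD];
    exists (join C X); rewrite -eX.
by move: quad_C_notin_AB; rewrite (join_unique XY XAB YAB) -(join_unique XY Xl Yl) Cl.
Qed.

Lemma curve_param_incident X : incident X AB ->
  incident (curve_param X) (join C X) /\ incident (curve_param X) (join D (rho X)).
Proof. by move=> XAB; apply/meet_incident/joinC_neq_joinD. Qed.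

Lemma curve_param_unique X Z : incident X AB ->
  incident Z (join C X) -> incident Z (join D (rho X)) -> curve_param X = Z.
Proof. by move=> XAB ZC ZD; rewrite (meet_unique (joinC_neq_joinD XAB) ZC ZD). Qed.

Lemma curve_param_vertex X : X = A \/ X = B -> curve_param X = X.
Proof.
move=> XAorB; have XAB : incident X AB.
  by case: XAorB => ->; [apply: incident_joinl|apply: incident_joinr]; exact: quad_neqAB.
apply: curve_param_unique => //.
  exact/incident_joinr/(point_neq_of_incident quad_C_notin_AB).
by rewrite hrefl_vertex //; exact/incident_joinr/(point_neq_of_incident quad_D_notin_AB).
Qed.

Lemma meet_join_curve_param X : incident X AB -> curve_param X != C ->
  meet AB (join C (curve_param X)) = X.
Proof.
move=> XAB ZC; have [ZCX _] := curve_param_incident XAB.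
have CX := point_neq_of_incident quad_C_notin_AB XAB.
have CZ : C != curve_param X by rewrite eq_sym.
by rewrite -(join_unique CZ (incident_joinl CX) ZCX) meet_join_id // quad_C_notin_AB.
Qed.

Lemma meet_join_curve_param_C X : incident X AB -> curve_param X = C ->
  meet AB (join D C) = rho X.
Proof.
move=> XAB ZC; have [_ ZDY] := curve_param_incident XAB; rewrite ZC in ZDY.
have YAB := incident_hrefl char2 quad_neqAB XAB.
have DY := point_neq_of_incident quad_D_notin_AB YAB.
have DC : D != C by rewrite eq_sym quad_neqCD.
by rewrite -(join_unique DC (incident_joinl DY) ZDY) meet_join_id // quad_D_notin_AB.
Qed.

Lemma curve_param_inj X1 X2 : incident X1 AB -> incident X2 AB ->
  curve_param X1 = curve_param X2 -> X1 = X2.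
Proof.
move=> X1AB X2AB e; have [ZC|ZC] := eqVneq (curve_param X1) C.
  rewrite -(hreflK char2 quad_neqAB X1AB) -(hreflK char2 quad_neqAB X2AB).
  by rewrite -(meet_join_curve_param_C X1AB ZC) -(meet_join_curve_param_C X2AB) // -e.
by rewrite -(meet_join_curve_param X1AB ZC) e meet_join_curve_param // -e.
Qed.

Lemma curve_param_in_curve X : incident X AB -> harmonic_curve A C B D (curve_param X).
Proof.
move=> XAB; case: (hreflP char2 quad_neqAB XAB) => [[XAorB _]|[_ _ H]].
  by left; rewrite curve_param_vertex //; case: XAorB => ->; rewrite !inE eqxx ?orbT.
set Z := curve_param X; have [ZCX ZDY] := curve_param_incident XAB.
have YAB := incident_hrefl char2 quad_neqAB XAB.
have CX := point_neq_of_incident quad_C_notin_AB XAB.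
have DY := point_neq_of_incident quad_D_notin_AB YAB.
have [Zv|Zv] := boolP (Z \in [:: A; C; B; D]); [by left | right].
move: Zv; rewrite !inE !negb_or => /and4P [ZA ZC ZB ZD].
have ZAB : ~~ incident Z AB.
  apply/negP => ZAB; have [/and5P [_ _ _ _ /andP [_ XY]] _ _] := H.
  have eX := common_point_unique (line_neq_of_incident quad_C_notin_AB (incident_joinl CX))
    ZAB ZCX XAB (incident_joinr CX).
  have eY := common_point_unique (line_neq_of_incident quad_D_notin_AB (incident_joinl DY))
    ZAB ZDY YAB (incident_joinr DY).
  by rewrite -eY -eX eqxx in XY.
have [ZX ZY] := (point_neq_of_incident ZAB XAB, point_neq_of_incident ZAB YAB).
have eC : join Z C = join Z X.
  by rewrite -(join_unique ZC ZCX (incident_joinl CX)) -(join_unique ZX ZCX (incident_joinr CX)).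
have eD : join Z D = join Z (rho X).
  by rewrite -(join_unique ZD ZDY (incident_joinl DY)) -(join_unique ZY ZDY (incident_joinr DY)).
have pen := harmonic_pencil_join H ZAB; rewrite -eC -eD in pen.
by split; [rewrite ZA ZC ZB ZD | case: pen | exact: pen].
Qed.

Lemma curve_param_onto_vertex Z : Z \in [:: A; C; B; D] ->
  exists2 X, incident X AB & curve_param X = Z.
Proof.
have DC : D != C by rewrite eq_sym quad_neqCD.
rewrite !inE => /or4P [] /eqP ->.
- by exists A; [apply: incident_joinl quad_neqAB | apply: curve_param_vertex; left].
- have YAB : incident (meet AB (join C D)) AB.
    exact/incident_meetl/(line_neq_of_incident quad_C_notin_AB)/incident_joinl/quad_neqCD.
  have XAB := incident_hrefl char2 quad_neqAB YAB.
  exists (rho (meet AB (join C D))) => //.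
  apply: curve_param_unique => //.
    exact/incident_joinl/(point_neq_of_incident quad_C_notin_AB).
  rewrite (hreflK char2 quad_neqAB YAB) join_meet_join ?quad_D_notin_AB ?quad_neqCD //.
  exact: incident_joinl quad_neqCD.
- by exists B; [apply: incident_joinr quad_neqAB | apply: curve_param_vertex; right].
- have XAB : incident (meet AB (join D C)) AB.
    exact/incident_meetl/(line_neq_of_incident quad_D_notin_AB)/incident_joinl.
  exists (meet AB (join D C)) => //.
  apply: curve_param_unique => //; first by rewrite join_meet_join ?quad_C_notin_AB ?incident_joinl.
  exact/incident_joinl/(point_neq_of_incident quad_D_notin_AB)/(incident_hrefl char2 quad_neqAB).
Qed.

Lemma curve_param_onto_pencil Z : Z \notin [:: A; C; B; D] ->
  distinct4 (join Z A) (join Z B) (join Z C) (join Z D) ->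
  harmonic_pencil Z (join Z A) (join Z B) (join Z C) (join Z D) ->
  exists2 X, incident X AB & curve_param X = Z.
Proof.
rewrite !inE !negb_or => /and4P [ZA ZC ZB ZD] /and5P [ZAB_neq _ _ _ _] pen.
have ZAB : ~~ incident Z AB.
  apply/negP => ZAB; move: ZAB_neq.
  by rewrite -(join_unique ZA ZAB (incident_joinl quad_neqAB))
    -(join_unique ZB ZAB (incident_joinr quad_neqAB)) eqxx.
have H := harmonic_meet_pencil pen ZAB.
rewrite (meet_join_id ZAB (incident_joinl quad_neqAB)) in H.
rewrite (meet_join_id ZAB (incident_joinr quad_neqAB)) in H.
have [XAB YAB] := harmonic_incident H.
exists (meet AB (join Z C)) => //.
apply: curve_param_unique => //; first by rewrite join_meet_join ?quad_C_notin_AB ?incident_joinl.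
by rewrite (hrefl_harmonicE char2 quad_neqAB H) join_meet_join ?quad_D_notin_AB ?incident_joinl.
Qed.

Lemma curve_param_onto Z : harmonic_curve A C B D Z ->
  exists2 X, incident X AB & curve_param X = Z.
Proof.
case=> [Zv|[Zv d4 pen]]; [exact: curve_param_onto_vertex | exact: curve_param_onto_pencil].
Qed.

End HarmonicCurve.

End ProjectivePlane.

Theorem mainTheorem2 (F : fieldType) (A C B D : point F) :
  (2%:R : F) != 0 ->
  quadrangle A C B D ->
  let Zmap := fun X => meet (join C X) (join D (hrefl A B X)) in
  [/\ (forall X, incident X (join A B) -> join C X <> join D (hrefl A B X)),
      (forall X1 X2, incident X1 (join A B) -> incident X2 (join A B) ->
          Zmap X1 = Zmap X2 -> X1 = X2),
      (forall X, incident X (join A B) -> harmonic_curve A C B D (Zmap X))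
    & (forall Z, harmonic_curve A C B D Z ->
          exists2 X, incident X (join A B) & Zmap X = Z)].
Proof.
move=> char2 quad Zmap; split.
- by move=> X XAB; apply/eqP; exact: joinC_neq_joinD.
- exact: curve_param_inj.
- exact: curve_param_in_curve.
- exact: curve_param_onto.
Qed.
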